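(* Let $\theta \in \mathbb{R}^d\setminus\{0\}$, $b \in \mathbb{R}$, and let $f(z)=\sigma(\langle \theta, z\rangle + b)$ with $\sigma(u)=1/(1+e^{-u})$, the predicted label being $\hat y(z)=1$ if $\langle\theta,z\rangle+b\ge 0$ and $\hat y(z)=0$ otherwise. Fix a threshold $\epsilon\in(1/2,1)$ and let $g$ be the counterfactual-explanation map defined below. Let $x\in\mathbb{R}^d$ with $\langle\theta,x\rangle+b\neq 0$, let $c=g(x)$ (the CF) and $c'=g(c)$ (the CCF). Put $m=\frac{c+c'}{2}$, $v=c-c'$, and $s=+1$ if $\hat y(c)=1$, $s=-1$ if $\hat y(c)=0$. Define the substitute classifier $h:\mathbb{R}^d\to\{0,1\}$ by $h(z)=1$ if $s\,\langle v, z-m\rangle\ge 0$ and $h(z)=0$ otherwise. Then $v\neq 0$, $m$ lies on the decision boundary $\{z:\langle\theta,z\rangle+b=0\}$, and $h(z)=\hat y(z)$ for every $z\in\mathbb{R}^d$; i.e. a substitute model with $100\%$ agreement with $f$ is obtained from the single pair $(c,c')$ together with their predicted labels, without any training.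
   Context: Counterfactual explanation map: for an input $z$ with predicted label $\ell=\hat y(z)$, $g(z)$ is the point closest to $z$ in Euclidean distance whose predicted probability of the opposite class $1-\ell$ is at least $\epsilon$; that is, with $t=\log\frac{\epsilon}{1-\epsilon}>0$, $g(z)=\arg\min\{\|w-z\|_2 : \langle\theta,w\rangle+b\ge t\}$ if $\ell=0$, and $g(z)=\arg\min\{\|w-z\|_2 : \langle\theta,w\rangle+b\le -t\}$ if $\ell=1$ (equivalently, $g(z)$ is obtained by moving from $z$ along $\pm\theta$, the gradient direction, until the target-class probability reaches $\epsilon$). The CCF of $x$ is the counterfactual explanation of its counterfactual explanation, $g(g(x))$. The attacker has access only to $c$, $c'$ and their predicted labels, not to $\theta$ or $b$. *)

From HB Require Import structures.
From mathcomp Require Import all_boot all_order all_algebra.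
From mathcomp Require Import all_classical all_reals all_analysis.
Set Implicit Arguments. Unset Strict Implicit. Unset Printing Implicit Defensive.
Import Order.TTheory GRing.Theory Num.Theory.
Local Open Scope ring_scope.

Section Defs.
Variables (R : realType) (d : nat).

Definition dotp (u v : 'rV[R]_d) : R := \sum_(i < d) u ord0 i * v ord0 i.
Definition enorm (u : 'rV[R]_d) : R := Num.sqrt (dotp u u).

Definition score (theta : 'rV[R]_d) (b : R) (z : 'rV[R]_d) : R := dotp theta z + b.

Definition sigmoid (u : R) : R := 1 / (1 + expR (- u)).
Definition fmodel theta b z := sigmoid (score theta b z).

(* predicted label: true = 1, false = 0 *)
Definition yhat theta b (z : 'rV[R]_d) : bool := 0 <= score theta b z.

Definition thr (eps : R) : R := ln (eps / (1 - eps)).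

Definition cf_feasible theta b eps (z w : 'rV[R]_d) : Prop :=
  if yhat theta b z then score theta b w <= - thr eps
  else thr eps <= score theta b w.

(* w = g(z): w is the Euclidean-closest feasible point to z (argmin) *)
Definition is_cf theta b eps (z w : 'rV[R]_d) : Prop :=
  cf_feasible theta b eps z w /\
  forall w', cf_feasible theta b eps z w' -> enorm (w - z) <= enorm (w' - z).

Definition hsub (c c' : 'rV[R]_d) (lc : bool) (z : 'rV[R]_d) : bool :=
  let m := 2^-1 *: (c + c') in
  let v := c - c' in
  let s : R := if lc then 1 else -1 in
  0 <= s * dotp v (z - m).
End Defs.

From HB Require Import structures.
From mathcomp Require Import all_boot all_order all_algebra.
From mathcomp Require Import all_classical all_reals all_analysis.
From mathcomp Require Import ring lra.
Set Implicit Arguments. Unset Strict Implicit. Unset Printing Implicit Defensive.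
Import Order.TTheory GRing.Theory Num.Theory.
Local Open Scope ring_scope.

(* For a linear score  <theta, w> + b  the feasible set of
   the counterfactual problem is a closed halfspace whose boundary is the level
   set  score = tau  with  tau = -t  (label 1) or  tau = t  (label 0), t > 0.
   The point of a halfspace closest to an outside point z is its orthogonal
   projection  z + a theta  onto the bounding hyperplane, so
   (1) every counterfactual is  g(z) = z + a theta  with  score (g z) = tau;
   in particular score c = +-t, the sign being given by the label of c.
   (2) Applying (1) to c gives  c' = c + a theta  with the opposite score -+t,
   hence  v = c - c' = -a theta  is a nonzero multiple of theta whose sign
   agrees with the label of c, and the midpoint m has score 0.
   (3) Then  s <v, z - m> = (s * -a) * score z  with  s * -a > 0, so the
   substitute classifier h has the same sign test as the model. *)

Section InnerProduct.
Variables (R : realType) (d : nat).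
Implicit Types (u v w : 'rV[R]_d) (a : R).

Lemma dotpC u v : dotp u v = dotp v u.
Proof. by apply: eq_bigr => i _; rewrite mulrC. Qed.

Lemma dotpDl u v w : dotp (u + v) w = dotp u w + dotp v w.
Proof. by rewrite /dotp -big_split; apply: eq_bigr => i _; rewrite mxE mulrDl. Qed.

Lemma dotpNl u w : dotp (- u) w = - dotp u w.
Proof. by rewrite /dotp -sumrN; apply: eq_bigr => i _; rewrite mxE mulNr. Qed.

Lemma dotpBl u v w : dotp (u - v) w = dotp u w - dotp v w.
Proof. by rewrite dotpDl dotpNl. Qed.

Lemma dotpZl a u w : dotp (a *: u) w = a * dotp u w.
Proof. by rewrite /dotp mulr_sumr; apply: eq_bigr => i _; rewrite mxE mulrA. Qed.

Lemma dotpDr u v w : dotp w (u + v) = dotp w u + dotp w v.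
Proof. by rewrite dotpC dotpDl !(dotpC w). Qed.

Lemma dotpBr u v w : dotp w (u - v) = dotp w u - dotp w v.
Proof. by rewrite dotpC dotpBl !(dotpC w). Qed.

Lemma dotpZr a u w : dotp w (a *: u) = a * dotp w u.
Proof. by rewrite dotpC dotpZl dotpC. Qed.

Lemma dotp_ge0 u : 0 <= dotp u u.
Proof. by apply: sumr_ge0 => i _; rewrite -expr2 sqr_ge0. Qed.

Lemma dotp_eq0 u : dotp u u = 0 -> u = 0.
Proof.
rewrite /dotp => sum_sq0; apply/rowP => i; rewrite mxE.
have sq_ge0 (j : 'I_d) : true -> 0 <= u ord0 j * u ord0 j.
  by move=> _; rewrite -expr2 sqr_ge0.
move/psumr_eq0P: sum_sq0 => /(_ sq_ge0 i isT) /eqP.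
by rewrite -expr2 sqrf_eq0 => /eqP.
Qed.

Lemma dotp_gt0 u : u != 0 -> 0 < dotp u u.
Proof.
move=> u0; rewrite lt_def dotp_ge0 andbT.
by apply: contra u0 => /eqP /dotp_eq0 ->.
Qed.

End InnerProduct.

Section Score.
Variables (R : realType) (d : nat) (theta : 'rV[R]_d) (b : R).
Local Notation score := (score theta b).
Local Notation n := (dotp theta theta).

Lemma score_shift (z : 'rV[R]_d) a : score (z + a *: theta) = score z + a * n.
Proof. by rewrite /score dotpDr dotpZr; ring. Qed.

Lemma score_mid (u w : 'rV[R]_d) : score (2^-1 *: (u + w)) = (score u + score w) / 2.
Proof. by rewrite /score dotpZr dotpDr; field. Qed.

(* A point c within distance |a theta| of z whose displacement has a component
   along theta at least that of  a theta  is the point  z + a theta  itself: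
   the square of  |c - z - a theta|  is then nonpositive. *)
Lemma closest_on_ray (z c : 'rV[R]_d) a :
  dotp (c - z) (c - z) <= a ^+ 2 * n ->
  0 <= a * (dotp theta (c - z) - a * n) ->
  c = z + a *: theta.
Proof.
move=> dist_le proj_ge.
set e := c - z - a *: theta.
have e_sq : dotp e e = dotp (c - z) (c - z) - 2 * a * dotp theta (c - z) + a ^+ 2 * n.
  rewrite /e !dotpBl !dotpBr !dotpZl !dotpZr (dotpC c theta) (dotpC z theta).
  by rewrite expr2; ring.
have e0 : dotp e e = 0 by apply/eqP; rewrite eq_le dotp_ge0 e_sq andbT; nra.
by apply/eqP; rewrite -subr_eq0 opprD addrA -/e (dotp_eq0 e0).
Qed.

Definition cf_target eps (z : 'rV[R]_d) : R :=
  if yhat theta b z then - thr eps else thr eps.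

Lemma cf_feasibleE eps (z w : 'rV[R]_d) : 0 < thr eps ->
  cf_feasible theta b eps z w <->
  0 <= (cf_target eps z - score z) * (score w - cf_target eps z).
Proof.
move=> t_gt0; rewrite /cf_feasible /cf_target /yhat -/(score z) -/(score w).
case: ifP => [z_side | /negbT]; last rewrite -ltNge => z_side.
  have gap_lt0 : - thr eps - score z < 0 by lra.
  by rewrite nmulr_rge0 // subr_le0.
have gap_gt0 : 0 < thr eps - score z by lra.
by rewrite pmulr_rge0 // subr_ge0.
Qed.

Lemma cf_projection eps (z c : 'rV[R]_d) : theta != 0 -> 0 < thr eps ->
  is_cf theta b eps z c ->
  exists a, c = z + a *: theta /\ score c = cf_target eps z.
Proof.
move=> theta0 t_gt0 [c_feas c_min].
have n_gt0 : 0 < n by apply: dotp_gt0.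
set tau := cf_target eps z.
set a := (tau - score z) / n.
have a_n : a * n = tau - score z by rewrite /a divfK ?gt_eqF.
have score_p : score (z + a *: theta) = tau by rewrite score_shift a_n; ring.
have p_feas : cf_feasible theta b eps z (z + a *: theta).
  by apply/cf_feasibleE => //; rewrite score_p -/tau subrr mulr0.
have dist_le : dotp (c - z) (c - z) <= a ^+ 2 * n.
  move: (c_min _ p_feas); rewrite [z + _]addrC addrK /enorm ler_sqrt ?dotp_ge0 //.
  by rewrite dotpZl dotpZr mulrA -expr2.
have proj_ge : 0 <= a * (dotp theta (c - z) - a * n).
  have -> : dotp theta (c - z) - a * n = score c - tau.
    by rewrite dotpBr a_n /tau /score; ring.
  rewrite /a mulrAC pmulr_lge0 ?invr_gt0 //.
  exact/(cf_feasibleE _ _ t_gt0).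
have c_eq := closest_on_ray dist_le proj_ge.
by exists a; rewrite c_eq score_p.
Qed.

Lemma cf_score eps (z c : 'rV[R]_d) : theta != 0 -> 0 < thr eps ->
  is_cf theta b eps z c ->
  score c = if yhat theta b c then thr eps else - thr eps.
Proof.
move=> theta0 t_gt0 /(cf_projection theta0 t_gt0) [_ [_]].
rewrite /cf_target /yhat -/(score c).
by case: ifP => _ ->; rewrite ?oppr_ge0 ?(ltW t_gt0) // leNgt t_gt0.
Qed.

Lemma hsub_agree (c c' : 'rV[R]_d) (lc : bool) k :
  c - c' = k *: theta -> score (2^-1 *: (c + c')) = 0 ->
  0 < (if lc then 1 else -1) * k ->
  forall z, hsub c c' lc z = yhat theta b z.
Proof.
move=> v_eq mid0 sk_gt0 z.
have dot_mid : dotp theta (2^-1 *: (c + c')) = - b.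
  by move: mid0; rewrite /score => /eqP; rewrite addr_eq0 => /eqP.
rewrite /hsub v_eq dotpZl dotpBr dot_mid mulrA pmulr_rge0 // /yhat /score.
by rewrite opprK.
Qed.

End Score.

Lemma thr_gt0 (R : realType) (eps : R) : 2^-1 < eps -> eps < 1 -> 0 < thr eps.
Proof. by move=> eps_gt eps_lt; apply: ln_gt0; rewrite ltr_pdivlMr; lra. Qed.

Theorem mainTheorem1 (R : realType) (d : nat) (theta : 'rV[R]_d) (b eps : R)
    (x c c' : 'rV[R]_d) :
  theta != 0 -> 2^-1 < eps -> eps < 1 ->
  score theta b x != 0 ->
  is_cf theta b eps x c -> is_cf theta b eps c c' ->
  (c - c' != 0) /\ score theta b (2^-1 *: (c + c')) = 0 /\
  (forall z : 'rV[R]_d, hsub c c' (yhat theta b c) z = yhat theta b z).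
Proof.
move=> theta0 eps_gt eps_lt _ cf_x cf_c.
have t_gt0 := thr_gt0 eps_gt eps_lt.
have score_c := cf_score theta0 t_gt0 cf_x.
have [a [c'_eq score_c']] := cf_projection theta0 t_gt0 cf_c.
have n_gt0 : 0 < dotp theta theta by apply: dotp_gt0.
have v_eq : c - c' = (- a) *: theta.
  by rewrite c'_eq opprD addrA subrr add0r scaleNr.
have shift := score_shift theta b c a; rewrite -c'_eq score_c' /cf_target in shift.
have mid0 : score theta b (2^-1 *: (c + c')) = 0.
  by rewrite score_mid score_c' /cf_target score_c; case: ifP => _; field.
have sa_gt0 : 0 < (if yhat theta b c then 1 else -1) * - a.
  by move: shift; rewrite score_c; case: ifP => _ shift; nra.
split; last by split => //; exact: hsub_agree v_eq mid0 sa_gt0.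
rewrite v_eq scaler_eq0 negb_or theta0 andbT oppr_eq0.
by apply: contraTneq sa_gt0 => ->; rewrite oppr0 mulr0 ltxx.
Qed.
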